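(* If $F$ is regular, i.e., $r''$ is bounded above on some interval $(1-\delta,1)$ with $\delta\in(0,1)$, then the limit $\lim_{v\to 1^-} r'(v)$ exists in $[-\infty,\infty)$ and lies in $[-\infty,0]$.
   Context: Let $F$ be a probability distribution on $[0,1]$ with support $[0,1]$ admitting a twice continuously differentiable density $f:(0,1)\to\mathbb{R}_{>0}$, and define the inverse hazard rate $r(v)=(1-F(v))/f(v)$ on $(0,1)$. *)

From Stdlib Require Import Reals.
From Coquelicot Require Import Coquelicot.
Open Scope R_scope.

Definition C2_on_open01 (f : R -> R) : Prop :=
  forall x, 0 < x < 1 ->
    ex_derive f x /\ ex_derive (Derive f) x /\ continuous (Derive (Derive f)) x.

Definition density01 (f : R -> R) : Prop :=
  (forall x, 0 < x < 1 -> 0 < f x) /\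
  C2_on_open01 f /\
  is_RInt_gen f (at_right 0) (at_left 1) 1.

Definition cdf (f : R -> R) (v : R) : R := RInt_gen f (at_right 0) (at_point v).

Definition inv_hazard (f : R -> R) (v : R) : R := (1 - cdf f v) / f v.

Definition regular (f : R -> R) : Prop :=
  exists delta M, 0 < delta < 1 /\
    forall v, 1 - delta < v < 1 -> Derive (Derive (inv_hazard f)) v <= M.

(* Write S = 1 - F for the survival function, so that r = S / f and S' = -f.
   Since r'' <= M near 1, the function v |-> M v - r'(v) is nondecreasing there,
   hence has a limit in (-oo, +oo] at 1, and r' has a limit l in [-oo, +oo).
   If l > 0, then r increases near 1, so r >= c > 0, i.e. S >= c f = - c S'.
   Then S(v) e^(v/c) is nondecreasing, so S stays bounded away from 0 near 1,
   contradicting F(v) -> 1. *)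

From Stdlib Require Import Reals Lra Classical.
From Coquelicot Require Import Coquelicot.
Open Scope R_scope.

Lemma at_left_open_interval (a b : R) : a < b -> at_left b (fun y => a < y < b).
Proof.
  intros Hab. unfold at_left, within.
  apply (filter_imp (fun y => a < y)); [intros y Hy Hyb; lra|].
  exact (open_gt a b Hab).
Qed.

Lemma at_right_open_interval (a b : R) : a < b -> at_right a (fun y => a < y < b).
Proof.
  intros Hab. unfold at_right, within.
  apply (filter_imp (fun y => y < b)); [intros y Hy Hya; lra|].
  exact (open_lt b a Hab).
Qed.

Lemma locally_open_interval (a b v : R) : a < v < b -> locally v (fun t => a < t < b).
Proof. exact (open_and _ _ (open_gt a) (open_lt b) v). Qed.

Lemma at_left_ex_interval (b : R) (P : R -> Prop) :
  at_left b P -> exists a, a < b /\ forall y, a < y < b -> P y.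
Proof.
  intros [d Hd]. exists (b - d). split; [destruct d; simpl; lra|].
  intros y Hy. apply Hd; [|lra]. change (Rabs (y - b) < d). rewrite Rabs_left; lra.
Qed.

Lemma nondecr_function (g dg : R -> R) (a b : R) :
  (forall x, a < x < b -> is_derive g x (dg x)) ->
  (forall x, a < x < b -> 0 <= dg x) ->
  forall x y, a < x -> x <= y -> y < b -> g x <= g y.
Proof.
  intros Hd Hpos x y Hx Hxy Hy.
  destruct (MVT_gen g x y dg) as [c [Hc Heq]].
  - intros z Hz. rewrite Rmin_left, Rmax_right in Hz by lra. apply Hd. lra.
  - intros z Hz. rewrite Rmin_left, Rmax_right in Hz by lra.
    apply continuity_pt_filterlim, (ex_derive_continuous (V := R_NormedModule)).
    exists (dg z). apply Hd. lra.
  - rewrite Rmin_left, Rmax_right in Hc by lra.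
    assert (0 <= dg c * (y - x)) by (apply Rmult_le_pos; [apply Hpos|]; lra). lra.
Qed.

Lemma nondecr_function_lim_left (g : R -> R) (a b : R) : a < b ->
  (forall x y, a < x -> x <= y -> y < b -> g x <= g y) ->
  exists l, filterlim g (at_left b) (Rbar_locally l).
Proof.
  intros Hab Hmono.
  set (E := fun z => exists x, a < x < b /\ z = g x).
  destruct (Lub_Rbar_correct E) as [Hub Hleast].
  set (l := Lub_Rbar E) in *.
  assert (Hbound : forall x, a < x < b -> Rbar_le (g x) l).
  { intros x Hx. apply Hub. exists x. auto. }
  assert (Happrox : forall u : R, Rbar_lt u l -> exists x, a < x < b /\ u < g x).
  { intros u Hu. apply NNPP. intros Hno. apply (Rbar_lt_not_le _ _ Hu), Hleast.
    intros z [x [Hx ->]]. simpl. apply Rnot_lt_le. intros Hlt. apply Hno. eauto. }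
  assert (Hnear : forall P, Rbar_locally l P ->
            exists u : R, Rbar_lt u l /\ forall z, u < z -> Rbar_le z l -> P z).
  { specialize (Hbound ((a + b) / 2) ltac:(lra)).
    destruct l as [L| |]; intros P HP.
    - destruct HP as [eps He]. exists (L - eps). split; [destruct eps; simpl; lra|].
      intros z Hz HzL. apply He. change (Rabs (z - L) < eps). simpl in HzL.
      apply Rabs_def1; lra.
    - destruct HP as [M HM]. exists M. split; [exact I|]. intros z Hz _. apply HM, Hz.
    - destruct Hbound. }
  exists l. intros P HP.
  destruct (Hnear P HP) as [u [Hu HPu]]. destruct (Happrox u Hu) as [x0 [Hx0 Hux0]].
  change (at_left b (fun y => P (g y))).
  apply (filter_imp (fun y => x0 < y < b)); [|apply at_left_open_interval; lra].
  intros y Hy. apply HPu.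
  - apply Rlt_le_trans with (g x0); [exact Hux0|]. apply Hmono; lra.
  - apply Hbound. lra.
Qed.

Lemma lim_left_of_Derive_le (h : R -> R) (a b M : R) : a < b ->
  (forall x, a < x < b -> ex_derive h x) ->
  (forall x, a < x < b -> Derive h x <= M) ->
  exists l, filterlim h (at_left b) (Rbar_locally l).
Proof.
  intros Hab Hd HM.
  set (g x := M * x - h x).
  assert (Hg : forall x y, a < x -> x <= y -> y < b -> g x <= g y).
  { apply (nondecr_function g (fun x => M - Derive h x)).
    - intros x Hx. unfold g. auto_derive; [apply Hd, Hx|]. rewrite Rmult_1_r, Rmult_1_l. reflexivity.
    - intros x Hx. specialize (HM x Hx). lra. }
  destruct (nondecr_function_lim_left g a b Hab Hg) as [lg Hlg].
  exists (Rbar_plus (M * b) (Rbar_opp lg)).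
  apply (filterlim_ext (fun x => M * x + - g x)); [intros x; unfold g; ring|].
  apply (filterlim_comp_2 (G := Rbar_locally (M * b)) (H := Rbar_locally (Rbar_opp lg))
           (fun x => M * x) (fun x => - g x) Rplus).
  - apply (filterlim_filter_le_1 _ (filter_le_within _)).
    apply (continuous_mult (fun _ => M) (fun x => x)).
    + apply filterlim_const.
    + apply filterlim_id.
  - exact (filterlim_comp _ _ _ g Ropp (at_left b) _ _ Hlg (filterlim_Rbar_opp lg)).
  - apply filterlim_Rbar_plus, Rbar_plus_correct. destruct lg; exact I.
Qed.

Lemma nondecr_exp_weighted (G dG : R -> R) (a b c : R) : 0 < c ->
  (forall x, a < x < b -> is_derive G x (dG x)) ->
  (forall x, a < x < b -> 0 <= G x + c * dG x) ->
  forall x y, a < x -> x <= y -> y < b -> G x * exp (x / c) <= G y * exp (y / c).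
Proof.
  intros Hc Hd Hge.
  apply (nondecr_function _ (fun t => exp (t / c) / c * (G t + c * dG t))).
  - intros x Hx.
    assert (He : is_derive (fun t => exp (t / c)) x (exp (x / c) / c)).
    { auto_derive; [exact I|]. unfold Rdiv. ring. }
    replace (exp (x / c) / c * (G x + c * dG x))
      with (dG x * exp (x / c) + G x * (exp (x / c) / c)) by (field; lra).
    exact (is_derive_mult G _ x _ _ (Hd x Hx) He Rmult_comm).
  - intros x Hx. apply Rmult_le_pos; [|apply Hge, Hx].
    apply Rlt_le, Rdiv_lt_0_compat; [apply exp_pos|exact Hc].
Qed.

Lemma not_lim_left_0_of_Derive_ge (G dG : R -> R) (a b c : R) : a < b -> 0 < c ->
  (forall x, a < x < b -> is_derive G x (dG x)) ->
  (forall x, a < x < b -> 0 < G x) ->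
  (forall x, a < x < b -> 0 <= G x + c * dG x) ->
  ~ filterlim G (at_left b) (locally 0).
Proof.
  intros Hab Hc Hd Hpos Hge Hlim.
  set (v := (a + b) / 2).
  set (m := G v * exp (v / c) / exp (b / c)).
  assert (Hm : 0 < m).
  { apply Rdiv_lt_0_compat; [apply Rmult_lt_0_compat|]; try apply exp_pos.
    apply Hpos. unfold v; lra. }
  assert (Hle : Rbar_le m 0).
  { apply (filterlim_le (F := at_left b) (fun _ => m) G m 0);
      [|apply filterlim_const|exact Hlim].
    apply (filter_imp (fun y => v < y < b)); [|apply at_left_open_interval; unfold v; lra].
    intros y Hy. apply Rle_div_l; [apply exp_pos|].
    apply Rle_trans with (G y * exp (y / c)).
    - apply (nondecr_exp_weighted G dG a b c); unfold v in *; auto; lra.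
    - apply Rmult_le_compat_l; [apply Rlt_le, Hpos; unfold v in Hy; lra|].
      apply Rlt_le, exp_increasing. unfold Rdiv. apply Rmult_lt_compat_r; [|lra].
      apply Rinv_0_lt_compat, Hc. }
  simpl in Hle. lra.
Qed.

Definition survival (f : R -> R) (v : R) : R := 1 - cdf f v.

Section Density.

Variable f : R -> R.
Hypothesis f_pos : forall x, 0 < x < 1 -> 0 < f x.
Hypothesis f_C2 : C2_on_open01 f.
Hypothesis f_int : is_RInt_gen f (at_right 0) (at_left 1) 1.

Lemma continuous_density x : 0 < x < 1 -> continuous f x.
Proof. intros Hx. apply (ex_derive_continuous (V := R_NormedModule)), f_C2, Hx. Qed.

Lemma ex_RInt_density a b : 0 < a < 1 -> 0 < b < 1 -> ex_RInt f a b.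
Proof.
  intros Ha Hb. apply (ex_RInt_continuous (V := R_CompleteNormedModule)).
  intros z Hz. apply continuous_density.
  assert (0 < Rmin a b) by (apply Rmin_glb_lt; lra).
  assert (Rmax a b < 1) by (apply Rmax_lub_lt; lra).
  lra.
Qed.

Lemma RInt_density_near_total eps : 0 < eps ->
  exists al be, 0 < al < 1 /\ 0 < be < 1 /\
    forall a b, 0 < a < al -> be < b < 1 -> Rabs (RInt f a b - 1) < eps.
Proof.
  intros He.
  destruct (f_int _ (locally_ball (T := R_UniformSpace) 1 (mkposreal _ He)))
    as [Q P [d1 HQ] [d2 HP] HQP].
  assert (Hd1 := cond_pos d1). assert (Hd2 := cond_pos d2).
  exists (Rmin d1 (1/2)), (Rmax (1 - d2) (1/2)).
  assert (Rmin d1 (1/2) <= d1) by apply Rmin_l.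
  assert (Rmin d1 (1/2) <= 1/2) by apply Rmin_r.
  assert (1 - d2 <= Rmax (1 - d2) (1/2)) by apply Rmax_l.
  assert (1/2 <= Rmax (1 - d2) (1/2)) by apply Rmax_r.
  split; [split; [apply Rmin_glb_lt|]; lra|].
  split; [split; [|apply Rmax_lub_lt]; lra|].
  intros a b Ha Hb.
  destruct (HQP a b) as [y [Hy Hball]].
  - apply HQ; [|lra]. change (Rabs (a - 0) < d1). rewrite Rabs_right; lra.
  - apply HP; [|lra]. change (Rabs (b - 1) < d2). rewrite Rabs_left; lra.
  - simpl in Hy. rewrite (is_RInt_unique _ _ _ _ Hy). exact Hball.
Qed.

Lemma ex_lim_RInt_density_at_0 :
  exists A0 : R, filterlim (fun a => RInt f a (1/2)) (at_right 0) (locally A0).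
Proof.
  apply (filterlim_locally_cauchy (U := R_CompleteSpace) (F := at_right 0)). intros eps.
  assert (He : 0 < eps / 2) by (destruct eps; simpl; lra).
  destruct (RInt_density_near_total _ He) as [al [be [Hal [Hbe Hnear]]]].
  exists (fun a => 0 < a < al). split; [apply at_right_open_interval; lra|].
  intros u v Hu Hv. change (Rabs (RInt f v (1/2) - RInt f u (1/2)) < eps).
  set (b := (be + 1) / 2).
  assert (Hchasles : forall a, 0 < a < al ->
            RInt f a (1/2) = RInt f a b + RInt f b (1/2)).
  { intros a Ha. symmetry. apply (RInt_Chasles f a b (1/2));
      apply ex_RInt_density; unfold b; lra. }
  rewrite (Hchasles u Hu), (Hchasles v Hv).
  assert (Hu1 := Hnear u b Hu ltac:(unfold b; lra)).
  assert (Hv1 := Hnear v b Hv ltac:(unfold b; lra)).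
  destruct (Rabs_def2 _ _ Hu1), (Rabs_def2 _ _ Hv1).
  apply Rabs_def1; lra.
Qed.

Lemma cdf_split (A0 : R) : filterlim (fun a => RInt f a (1/2)) (at_right 0) (locally A0) ->
  forall v, 0 < v < 1 -> cdf f v = A0 + RInt f (1/2) v.
Proof.
  intros HA0 v Hv. unfold cdf. apply is_RInt_gen_unique.
  apply (is_RInt_gen_Chasles f (1/2) A0 (RInt f (1/2) v)).
  - apply (filterlimi_lim_ext_loc (fun ab => RInt f (fst ab) (snd ab))).
    + apply (Filter_prod _ _ _ (fun a => 0 < a < 1) (fun b => b = 1/2));
        [apply at_right_open_interval; lra|reflexivity|].
      intros a b Ha ->. apply (RInt_correct (V := R_CompleteNormedModule)).
      apply ex_RInt_density; simpl; lra.
    + apply (filterlim_ext_loc (fun ab => RInt f (fst ab) (1/2))).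
      * apply (Filter_prod _ _ _ (fun _ => True) (fun b => b = 1/2));
          [apply filter_true|reflexivity|].
        intros a b _ ->. reflexivity.
      * exact (filterlim_comp _ _ _ fst (fun a => RInt f a (1/2)) _ (at_right 0) _
                 filterlim_fst HA0).
  - apply is_RInt_gen_at_point, (RInt_correct (V := R_CompleteNormedModule)).
    apply ex_RInt_density; lra.
Qed.

Lemma is_derive_survival v : 0 < v < 1 -> is_derive (survival f) v (- f v).
Proof.
  intros Hv. destruct ex_lim_RInt_density_at_0 as [A0 HA0].
  apply (is_derive_ext_loc (fun w => 1 - A0 - RInt f (1/2) w)).
  - apply (filter_imp (fun t => 0 < t < 1)).
    + intros t Ht. unfold survival. rewrite (cdf_split A0 HA0 t Ht). simpl. ring.
    + exact (locally_open_interval 0 1 v Hv).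
  - assert (HI : is_derive (RInt f (1/2)) v (f v)).
    { apply (is_derive_RInt (V := R_NormedModule) f _ (1/2)); [|apply continuous_density, Hv].
      apply (filter_imp (fun t => 0 < t < 1)).
      + intros t Ht. apply (RInt_correct (V := R_CompleteNormedModule)).
        apply ex_RInt_density; lra.
      + exact (locally_open_interval 0 1 v Hv). }
    replace (- f v) with (minus zero (f v)) by (unfold minus, plus, opp, zero; simpl; ring).
    exact (is_derive_minus _ _ _ _ _ (is_derive_const (1 - A0) v) HI).
Qed.

Lemma survival_lim_1 : filterlim (survival f) (at_left 1) (locally 0).
Proof.
  destruct ex_lim_RInt_density_at_0 as [A0 HA0].
  intros P [eps HP].
  assert (He : 0 < eps / 2) by (destruct eps; simpl; lra).
  destruct (RInt_density_near_total _ He) as [al [be [Hal [Hbe Hnear]]]].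
  assert (Hclose : at_right 0 (fun a => 0 < a < al /\ ball A0 (mkposreal _ He) (RInt f a (1/2)))).
  { apply filter_and; [apply at_right_open_interval; lra|].
    exact (HA0 _ (locally_ball (T := R_UniformSpace) A0 (mkposreal _ He))). }
  destruct (Hierarchy.filter_ex _ Hclose) as [a [Ha HaA0]].
  change (Rabs (RInt f a (1/2) - A0) < eps / 2) in HaA0.
  change (at_left 1 (fun y => P (survival f y))).
  apply (filter_imp (fun y => be < y < 1)); [|apply at_left_open_interval; lra].
  intros y Hy. apply HP. change (Rabs (survival f y - 0) < eps).
  unfold survival. rewrite (cdf_split A0 HA0 y) by lra.
  assert (Hchasles : RInt f a (1/2) + RInt f (1/2) y = RInt f a y).
  { apply (RInt_Chasles f a (1/2) y); apply ex_RInt_density; lra. }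
  assert (Hay := Hnear a y Ha Hy).
  destruct (Rabs_def2 _ _ Hay), (Rabs_def2 _ _ HaA0).
  apply Rabs_def1; lra.
Qed.

Lemma survival_pos v : 0 < v < 1 -> 0 < survival f v.
Proof.
  intros Hv.
  assert (Hdecr : forall x y, 0 < x -> x < y -> y < 1 -> survival f y < survival f x).
  { intros x y Hx Hxy Hy.
    enough (- survival f x < - survival f y) by lra.
    apply (incr_function (fun t => - survival f t) 0 1 f); simpl; try lra.
    - intros t Ht0 Ht1. rewrite <- (Ropp_involutive (f t)).
      apply (is_derive_opp (survival f)), is_derive_survival. lra.
    - intros t Ht0 Ht1. apply f_pos. lra. }
  set (w := (v + 1) / 2).
  assert (Hw : 0 <= survival f w).
  { apply (filterlim_le (F := at_left 1) (survival f) (fun _ => survival f w) 0 (survival f w));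
      [|exact survival_lim_1|apply filterlim_const].
    apply (filter_imp (fun y => w < y < 1)); [|apply at_left_open_interval; unfold w; lra].
    intros y Hy. apply Rlt_le, Hdecr; unfold w in *; lra. }
  assert (survival f w < survival f v) by (apply Hdecr; unfold w; lra).
  lra.
Qed.

Lemma is_derive_inv_hazard v : 0 < v < 1 ->
  is_derive (inv_hazard f) v (-1 - survival f v * Derive f v / f v ^ 2).
Proof.
  intros Hv. assert (Hf := f_pos v Hv).
  replace (-1 - survival f v * Derive f v / f v ^ 2)
    with ((- f v * f v - survival f v * Derive f v) / f v ^ 2) by (field; lra).
  apply (is_derive_div (survival f) f); [apply is_derive_survival, Hv| |lra].
  apply Derive_correct, f_C2, Hv.
Qed.

Lemma ex_derive_Derive_inv_hazard v : 0 < v < 1 -> ex_derive (Derive (inv_hazard f)) v.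
Proof.
  intros Hv.
  apply (ex_derive_ext_loc (fun w => -1 - survival f w * Derive f w / f w ^ 2)).
  - apply (filter_imp (fun t => 0 < t < 1)).
    + intros t Ht. symmetry. apply is_derive_unique, is_derive_inv_hazard, Ht.
    + exact (locally_open_interval 0 1 v Hv).
  - assert (Hf := f_pos v Hv). destruct (f_C2 v Hv) as [Hf1 [Hf2 _]].
    auto_derive. repeat split; auto.
    + exists (- f v). apply is_derive_survival, Hv.
    + apply Rgt_not_eq. nra.
Qed.

Lemma Derive_inv_hazard_lim_nonpos (l : Rbar) :
  filterlim (Derive (inv_hazard f)) (at_left 1) (Rbar_locally l) -> Rbar_le l 0.
Proof.
  intros Hl. apply Rbar_not_lt_le. intros Hpos.
  assert (Hev : at_left 1 (fun y => 0 < y < 1 /\ 0 < Derive (inv_hazard f) y)).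
  { apply filter_and; [apply at_left_open_interval; lra|].
    exact (Hl _ (open_Rbar_gt' _ _ Hpos)). }
  destruct (at_left_ex_interval _ _ Hev) as [a [Ha Hr']].
  set (v := (a + 1) / 2).
  assert (Hv : 0 < v < 1) by (apply Hr'; unfold v; lra).
  assert (Hmono : forall y, v <= y < 1 -> inv_hazard f v <= inv_hazard f y).
  { intros y Hy.
    apply (nondecr_function _ (Derive (inv_hazard f)) a 1); unfold v in *; try lra.
    - intros x Hx. apply Derive_correct. eexists.
      apply is_derive_inv_hazard, Hr', Hx.
    - intros x Hx. apply Rlt_le, Hr', Hx. }
  set (c := inv_hazard f v).
  assert (Hc : 0 < c) by (apply Rdiv_lt_0_compat; [apply survival_pos|apply f_pos]; exact Hv).
  apply (not_lim_left_0_of_Derive_ge (survival f) (fun x => - f x) v 1 c);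
    [lra|exact Hc| | | |exact survival_lim_1].
  - intros x Hx. apply is_derive_survival. lra.
  - intros x Hx. apply survival_pos. lra.
  - intros x Hx.
    assert (Hcx : c * f x <= survival f x).
    { apply Rle_div_r; [apply f_pos; lra|]. apply (Hmono x). lra. }
    lra.
Qed.

End Density.

Theorem lemma6 (f : R -> R) :
  density01 f -> regular f ->
  exists l : Rbar,
    filterlim (Derive (inv_hazard f)) (at_left 1) (Rbar_locally l) /\
    Rbar_le l (Finite 0).
Proof.
  intros [f_pos [f_C2 f_int]] [delta [M [Hdelta HM]]].
  destruct (lim_left_of_Derive_le (Derive (inv_hazard f)) (1 - delta) 1 M) as [l Hl];
    [lra| |exact HM|].
  - intros x Hx. apply ex_derive_Derive_inv_hazard; auto. lra.
  - exists l. split; [exact Hl|].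
    exact (Derive_inv_hazard_lim_nonpos f f_pos f_C2 f_int l Hl).
Qed.
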